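(* Let $X$ be an anti-linear operator on $H^2(\mathbb{D})$. Then $XM_z=M_zX$ if and only if $X=J_{H^2(\mathbb{D})}M_\theta$ for some $\theta\in H^\infty(\mathbb{D})$.
   Context: $H^2(\mathbb{D})$ is the Hardy space of the unit disc, $M_z$ and $M_\theta$ denote multiplication by $z$ and by $\theta$, $H^\infty(\mathbb{D})$ is the algebra of bounded analytic functions on $\mathbb{D}$, and $J_{H^2(\mathbb{D})}(\sum a_nz^n)=\sum\bar a_nz^n$. *)

(* H^2(D) is identified with its Taylor-coefficient
   sequences f : nat -> C with sum |f n|^2 < oo (f(z) = sum f n z^n). *)
From Stdlib Require Import Reals.
From Coquelicot Require Import Coquelicot.
Open Scope R_scope.

Definition H2 (f : nat -> C) : Prop := ex_series (fun n => (Cmod (f n)) ^ 2).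

Definition H2norm2 (f : nat -> C) : R := Series (fun n => (Cmod (f n)) ^ 2).

Definition Hinf (t : nat -> C) : Prop :=
  exists M : R, forall z : C, Cmod z < 1 ->
    exists s : C, is_series (fun n => Cmult (t n) (Cpow z n)) s /\ Cmod s <= M.

Definition Mz (f : nat -> C) : nat -> C :=
  fun n => match n with O => RtoC 0 | S k => f k end.

Definition JH2 (f : nat -> C) : nat -> C := fun n => Cconj (f n).

Definition Mtheta (t f : nat -> C) : nat -> C :=
  fun n => sum_n (fun k => Cmult (t k) (f (n - k)%nat)) n.

(* X is a bounded anti-linear operator on H^2(D) (values of X outside H^2 are
   irrelevant) *)
Definition antilinear_op (X : (nat -> C) -> (nat -> C)) : Prop :=
  (forall f, H2 f -> H2 (X f)) /\
  (forall f g, H2 f -> H2 g ->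
     X (fun n => Cplus (f n) (g n)) = (fun n => Cplus (X f n) (X g n))) /\
  (forall (c : C) f, H2 f ->
     X (fun n => Cmult c (f n)) = (fun n => Cmult (Cconj c) (X f n))) /\
  (exists M : R, forall f, H2 f -> H2norm2 (X f) <= M * H2norm2 f).

From Stdlib Require Import Reals Lra Lia FunctionalExtensionality.
From Coquelicot Require Import Coquelicot.
Open Scope R_scope.

(* Writing f = f 0 + z (backshift f), antilinearity and X M_z = M_z X give
   X f = conj (f 0) X 1 + M_z X (backshift f), so by induction on the coefficient index
   X f = J (theta f) with theta = J (X 1); conversely J M_theta commutes with M_z because J
   and M_theta both do.  To see that theta is bounded on the disc, test X on the truncations
   k_N of the Szego kernel at w: the pairing of J (X k_N) with (w^n)_n is theta(w) |k_N|^2,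
   so Cauchy-Schwarz and |X k_N|^2 <= M |k_N|^2 give |theta(w)|^2 |k_N|^2 <= M / (1 - |w|^2),
   and |k_N|^2 -> 1 / (1 - |w|^2) yields |theta(w)|^2 <= M. *)

Lemma is_series_le_R (u v : nat -> R) lu lv :
  (forall n, u n <= v n) -> is_series u lu -> is_series v lv -> lu <= lv.
Proof.
  intros Huv Hu Hv.
  apply (is_lim_seq_le (sum_n u) (sum_n v) lu lv); [|exact Hu|exact Hv].
  intros N; apply sum_n_m_le, Huv.
Qed.

Lemma is_series_ge0 (u : nat -> R) l : (forall n, 0 <= u n) -> is_series u l -> 0 <= l.
Proof.
  intros Hu Hl; apply (is_series_le_R (fun _ => 0) u); [exact Hu| |exact Hl].
  apply (filterlim_ext (fun _ => 0)); [|apply filterlim_const].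
  intros N; rewrite sum_n_const; ring.
Qed.

Lemma Cmod_is_series_le (a : nat -> C) (c : nat -> R) (la : C) (lc : R) :
  (forall n, Cmod (a n) <= c n) -> is_series a la -> is_series c lc -> Cmod la <= lc.
Proof.
  intros Hac Ha Hc.
  refine (is_lim_seq_le (fun N => Cmod (sum_n a N)) (sum_n c) (Cmod la) lc _ _ Hc).
  2: exact (filterlim_comp _ _ _ (sum_n a) norm _ _ _ Ha (filterlim_norm la)).
  intros N; eapply Rle_trans; [apply (norm_sum_n_m a)|apply sum_n_m_le, Hac].
Qed.

Lemma is_series_finite_support {K : AbsRing} {V : NormedModule K} (a : nat -> V) N :
  (forall n, (N < n)%nat -> a n = zero) -> is_series a (sum_n a N).
Proof.
  intros Ha; apply (filterlim_ext_loc (fun _ => sum_n a N)); [|apply filterlim_const].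
  exists N; intros m Hm; induction Hm; [reflexivity|].
  rewrite sum_Sn, Ha, plus_zero_r by lia; exact IHHm.
Qed.

Lemma sum_n_pow_succ (r : R) N :
  sum_n (fun n => r ^ n) (S N) = 1 + r * sum_n (fun n => r ^ n) N.
Proof.
  induction N as [|N IH].
  - rewrite sum_Sn, !sum_O; simpl; change plus with Rplus; ring.
  - rewrite sum_Sn, IH at 1; rewrite (sum_Sn _ N); simpl; change plus with Rplus; ring.
Qed.

Lemma sum_n_pow_ge1 (r : R) N : 0 <= r -> 1 <= sum_n (fun n => r ^ n) N.
Proof.
  intros Hr; induction N as [|N IH].
  - rewrite sum_O; simpl; lra.
  - rewrite sum_n_pow_succ; pose proof (Rmult_le_pos _ _ Hr (Rle_trans _ _ _ Rle_0_1 IH)); lra.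
Qed.

Lemma quadratic_nonneg_discriminant (A B Cc : R) :
  0 < B -> (forall t, 0 <= A - 2 * t * Cc + t ^ 2 * B) -> Cc ^ 2 <= A * B.
Proof.
  intros HB Hq; specialize (Hq (Cc / B)).
  assert (E : Cc = Cc / B * B) by (field; lra).
  set (u := Cc / B) in *; rewrite E in Hq |- *; nra.
Qed.

Definition backshift (f : nat -> C) : nat -> C := fun k => f (S k).

Definition e0 : nat -> C := fun n => match n with O => RtoC 1 | S _ => RtoC 0 end.

Lemma H2_Mz f : H2 f -> H2 (Mz f).
Proof. intros Hf; apply ex_series_incr_1; exact Hf. Qed.

Lemma H2_backshift f : H2 f -> H2 (backshift f).
Proof. intros Hf; apply ex_series_incr_1 in Hf; exact Hf. Qed.

Lemma H2_scal (c : C) f : H2 f -> H2 (fun n => (c * f n)%C).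
Proof.
  intros Hf; eapply ex_series_ext; [|apply (ex_series_scal_l (Cmod c ^ 2)), Hf].
  intros n; rewrite Cmod_mult; unfold scal; simpl; unfold mult; simpl; ring.
Qed.

Lemma H2_JH2 f : H2 f -> H2 (JH2 f).
Proof. apply ex_series_ext; intros n; unfold JH2; rewrite Cmod_conj; reflexivity. Qed.

Lemma H2norm2_JH2 f : H2norm2 (JH2 f) = H2norm2 f.
Proof. apply Series_ext; intros n; unfold JH2; rewrite Cmod_conj; reflexivity. Qed.

Lemma H2_e0 : H2 e0.
Proof.
  exists (sum_n (fun n => Cmod (e0 n) ^ 2) 0); apply (is_series_finite_support (V := R_NormedModule)).
  intros [|n] Hn; [lia|]; simpl; rewrite Cmod_0; change zero with 0; ring.
Qed.

Lemma Mz_backshift_decomp f : f = fun n => (f 0%nat * e0 n + Mz (backshift f) n)%C.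
Proof. extensionality n; destruct n; simpl; unfold backshift; ring. Qed.

Lemma ex_series_Cmod_mult a b :
  H2 a -> H2 b -> ex_series (fun n => Cmod (a n) * Cmod (b n)).
Proof.
  intros Ha Hb.
  apply (ex_series_le (V := R_CompleteNormedModule) _ (fun n => /2 * (Cmod (a n) ^ 2 + Cmod (b n) ^ 2))).
  - intros n; unfold norm; simpl; unfold abs; simpl.
    pose proof (Cmod_ge_0 (a n)); pose proof (Cmod_ge_0 (b n)).
    pose proof (pow2_ge_0 (Cmod (a n) - Cmod (b n))).
    rewrite Rabs_pos_eq by nra; nra.
  - apply (ex_series_scal_l (V := R_NormedModule) (/2) (fun n => Cmod (a n) ^ 2 + Cmod (b n) ^ 2)).
    apply (ex_series_plus (V := R_NormedModule) _ _ Ha Hb).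
Qed.

(* Cauchy-Schwarz, via the nonnegative quadratic t |-> sum (|a n| - t |b n|)^2. *)
Lemma Cmod_is_series_mult_sq_le (a b : nat -> C) (l : C) :
  H2 a -> H2 b -> 0 < H2norm2 b ->
  is_series (fun n => (a n * b n)%C) l -> Cmod l ^ 2 <= H2norm2 a * H2norm2 b.
Proof.
  intros Ha Hb HB Hl.
  set (c := fun n => Cmod (a n) * Cmod (b n)).
  assert (Hc : is_series c (Series c)) by (apply Series_correct, ex_series_Cmod_mult; assumption).
  assert (Hlc : Cmod l <= Series c).
  { apply (Cmod_is_series_le _ c _ _ (fun n => Req_le _ _ (Cmod_mult _ _)) Hl Hc). }
  assert (Hquad : forall t, 0 <= H2norm2 a - 2 * t * Series c + t ^ 2 * H2norm2 b).
  { intros t; apply (is_series_ge0 (fun n => (Cmod (a n) - t * Cmod (b n)) ^ 2)).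
    - intros n; apply pow2_ge_0.
    - replace (H2norm2 a - 2 * t * Series c + t ^ 2 * H2norm2 b)
        with (plus (plus (H2norm2 a) (scal (-2 * t) (Series c))) (scal (t ^ 2) (H2norm2 b)))
        by (unfold plus, scal; simpl; unfold mult; simpl; ring).
      eapply is_series_ext;
        [|apply (is_series_plus _ _ _ _ (is_series_plus _ _ _ _ (Series_correct _ Ha)
                   (is_series_scal_l (-2 * t) _ _ Hc)) (is_series_scal_l (t ^ 2) _ _ (Series_correct _ Hb)))].
      intros n; unfold c, plus, scal; simpl; unfold mult; simpl; ring. }
  pose proof (quadratic_nonneg_discriminant _ _ _ HB Hquad).
  pose proof (Cmod_ge_0 l); nra.
Qed.

Lemma JH2_JH2 f : JH2 (JH2 f) = f.
Proof. extensionality n; apply Cconj_conj. Qed.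

Lemma JH2_Mz f : JH2 (Mz f) = Mz (JH2 f).
Proof.
  extensionality n; destruct n; unfold JH2; simpl; [|reflexivity].
  unfold Cconj, RtoC; simpl; f_equal; ring.
Qed.

Lemma is_series_Mz (g : nat -> C) (l : C) : is_series g l -> is_series (Mz g) l.
Proof.
  intros Hg; apply is_series_decr_1.
  match goal with |- is_series _ ?l' => replace l' with l; [exact Hg|] end.
  change (l = Cplus l (Copp (RtoC 0))); ring.
Qed.

Lemma Mtheta_Mz t f : Mtheta t (Mz f) = Mz (Mtheta t f).
Proof.
  extensionality n; unfold Mtheta; destruct n; cbn [Mz].
  - rewrite sum_O; simpl; ring.
  - rewrite sum_Sn, Nat.sub_diag; cbn [Mz].
    rewrite (sum_n_ext_loc _ (fun k => (t k * f (n - k)%nat)%C)).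
    + change (plus ?x ?y) with (Cplus x y); ring.
    + intros k Hk; rewrite Nat.sub_succ_l by exact Hk; reflexivity.
Qed.

Lemma is_series_Cpow_norm (w : C) :
  Cmod w < 1 -> is_series (fun n => Cmod (Cpow w n) ^ 2) (/ (1 - Cmod w ^ 2)).
Proof.
  intros Hw; pose proof (Cmod_ge_0 w).
  eapply is_series_ext; [|apply is_series_geom; rewrite Rabs_pos_eq; nra].
  intros n; rewrite Cmod_pow, <- !pow_mult, Nat.mul_comm; reflexivity.
Qed.

Definition szego_trunc (w : C) (N : nat) : nat -> C :=
  fun n => if (n <=? N)%nat then Cpow (Cconj w) n else RtoC 0.

Lemma szego_trunc_0 w : szego_trunc w 0 = e0.
Proof. extensionality n; destruct n; reflexivity. Qed.

Lemma szego_trunc_succ_0 w N : szego_trunc w (S N) 0%nat = RtoC 1.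
Proof. reflexivity. Qed.

Lemma backshift_szego_trunc w N :
  backshift (szego_trunc w (S N)) = fun k => (Cconj w * szego_trunc w N k)%C.
Proof.
  extensionality k; unfold backshift, szego_trunc; simpl.
  destruct (k <=? N)%nat; ring.
Qed.

Lemma is_series_szego_trunc_norm w N :
  is_series (fun n => Cmod (szego_trunc w N n) ^ 2) (sum_n (fun n => (Cmod w ^ 2) ^ n) N).
Proof.
  replace (sum_n (fun n => (Cmod w ^ 2) ^ n) N)
    with (sum_n (fun n => Cmod (szego_trunc w N n) ^ 2) N).
  - apply (is_series_finite_support (V := R_NormedModule)); intros n Hn.
    unfold szego_trunc; rewrite (proj2 (Nat.leb_gt n N) Hn), Cmod_0.
    change (0 ^ 2 = 0); ring.
  - apply sum_n_ext_loc; intros n Hn; unfold szego_trunc.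
    rewrite (proj2 (Nat.leb_le n N) Hn), Cmod_pow, Cmod_conj, <- !pow_mult, Nat.mul_comm.
    reflexivity.
Qed.

Lemma H2_szego_trunc w N : H2 (szego_trunc w N).
Proof. eexists; apply is_series_szego_trunc_norm. Qed.

Lemma H2norm2_szego_trunc w N :
  H2norm2 (szego_trunc w N) = sum_n (fun n => (Cmod w ^ 2) ^ n) N.
Proof. exact (is_series_unique _ _ (is_series_szego_trunc_norm w N)). Qed.

Section ShiftCommuting.

Variable X : (nat -> C) -> nat -> C.
Hypothesis HX : antilinear_op X.
Hypothesis HXMz : forall f, H2 f -> X (Mz f) = Mz (X f).

Definition symbol : nat -> C := JH2 (X e0).

Lemma JH2_X_decomp f : H2 f ->
  JH2 (X f) = fun n => (f 0%nat * symbol n + Mz (JH2 (X (backshift f))) n)%C.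
Proof.
  intros Hf; destruct HX as [_ [Hadd [Hscal _]]].
  pose proof (Mz_backshift_decomp f) as Ef; rewrite Ef at 1.
  rewrite Hadd, Hscal, HXMz by auto using H2_scal, H2_e0, H2_Mz, H2_backshift.
  rewrite <- JH2_Mz; extensionality n; unfold JH2, symbol.
  rewrite Cplus_conj, Cmult_conj, Cconj_conj; reflexivity.
Qed.

Lemma X_eq_JH2_Mtheta f : H2 f -> X f = JH2 (Mtheta symbol f).
Proof.
  intros Hf; rewrite <- (JH2_JH2 (X f)); f_equal.
  extensionality n; revert f Hf; induction n as [|n IH]; intros f Hf;
    rewrite (JH2_X_decomp f Hf); unfold Mtheta; cbn [Mz].
  - rewrite sum_O; simpl; ring.
  - rewrite IH by (apply H2_backshift, Hf).
    rewrite sum_Sn, Nat.sub_diag; unfold Mtheta.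
    rewrite (sum_n_ext_loc (fun k => (symbol k * f (S n - k)%nat)%C)
                           (fun k => (symbol k * backshift f (n - k)%nat)%C)).
    + change (plus ?x ?y) with (Cplus x y); ring.
    + intros k Hk; unfold backshift; rewrite Nat.sub_succ_l by exact Hk; reflexivity.
Qed.

Lemma JH2_X_szego_trunc_succ w N :
  JH2 (X (szego_trunc w (S N))) =
  fun n => (symbol n + Mz (fun k => Cconj w * JH2 (X (szego_trunc w N)) k) n)%C.
Proof.
  destruct HX as [_ [_ [Hscal _]]].
  rewrite (JH2_X_decomp _ (H2_szego_trunc w (S N))), backshift_szego_trunc.
  rewrite Hscal by apply H2_szego_trunc.
  extensionality n; destruct n; cbn [Mz]; unfold JH2; rewrite szego_trunc_succ_0.
  - ring.
  - rewrite Cmult_conj, Cconj_conj; ring.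
Qed.

Lemma is_series_JH2_X_szego_trunc w (s : C) N :
  is_series (fun n => (symbol n * Cpow w n)%C) s ->
  is_series (fun n => (JH2 (X (szego_trunc w N)) n * Cpow w n)%C)
            (Cmult s (RtoC (sum_n (fun n => (Cmod w ^ 2) ^ n) N))).
Proof.
  intros Hs; induction N as [|N IH].
  - rewrite szego_trunc_0, sum_O.
    replace (Cmult s (RtoC ((Cmod w ^ 2) ^ 0))) with s by (simpl; ring); exact Hs.
  - rewrite JH2_X_szego_trunc_succ, sum_n_pow_succ.
    replace (Cmult s (RtoC (1 + Cmod w ^ 2 * sum_n (fun n => (Cmod w ^ 2) ^ n) N)))
      with (plus s (scal (Cconj w * w)%C (Cmult s (RtoC (sum_n (fun n => (Cmod w ^ 2) ^ n) N)))))
      by (rewrite RtoC_plus, RtoC_mult, Cmod2_conj; unfold plus, scal; simpl; unfold mult; simpl; ring).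
    eapply is_series_ext; [|exact (is_series_plus _ _ _ _ Hs (is_series_Mz _ _ (is_series_scal _ _ _ IH)))].
    intros [|n]; unfold plus, scal; simpl; unfold mult; simpl; ring.
Qed.

Lemma Cmod_symbol_series_sq_le w (s : C) M :
  (forall f, H2 f -> H2norm2 (X f) <= M * H2norm2 f) ->
  Cmod w < 1 -> is_series (fun n => (symbol n * Cpow w n)%C) s -> Cmod s ^ 2 <= M.
Proof.
  intros HM Hw Hs; destruct HX as [HXH2 _].
  set (r := Cmod w ^ 2); set (K := / (1 - r)).
  assert (Hr : 0 <= r < 1) by (pose proof (Cmod_ge_0 w); unfold r; split; nra).
  assert (HK : 0 < K) by (apply Rinv_0_lt_compat; lra).
  pose proof (is_series_Cpow_norm w Hw) as Hpow; fold r K in Hpow.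
  assert (Hnorm : H2norm2 (Cpow w) = K) by exact (is_series_unique _ _ Hpow).
  assert (Hbound : forall N, Cmod s ^ 2 * sum_n (fun n => r ^ n) N <= M * K).
  { intros N; set (SN := sum_n (fun n => r ^ n) N).
    pose proof (sum_n_pow_ge1 r N (proj1 Hr)) as HSN; fold SN in HSN.
    pose proof (Cmod_is_series_mult_sq_le _ _ _ (H2_JH2 _ (HXH2 _ (H2_szego_trunc w N)))
                  (ex_intro _ _ Hpow) (ltac:(rewrite Hnorm; exact HK))
                  (is_series_JH2_X_szego_trunc w s N Hs)) as HCS.
    rewrite H2norm2_JH2, Hnorm, Cmod_mult, Cmod_R, Rabs_pos_eq in HCS
      by (fold r SN; lra).
    pose proof (HM _ (H2_szego_trunc w N)) as HXk.
    rewrite H2norm2_szego_trunc in HXk.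
    fold r SN in HCS, HXk.
    pose proof (Rmult_le_compat_r K _ _ (Rlt_le _ _ HK) HXk).
    apply Rmult_le_reg_l with SN; [lra|nra]. }
  assert (Hlim : Cmod s ^ 2 * K <= M * K).
  { apply (is_lim_seq_le _ _ (Cmod s ^ 2 * K) (M * K) Hbound).
    - apply (is_lim_seq_scal_l _ _ K), is_series_geom; rewrite Rabs_pos_eq; lra.
    - apply is_lim_seq_const. }
  apply Rmult_le_reg_r with K; assumption.
Qed.

Lemma symbol_Hinf : Hinf symbol.
Proof.
  pose proof HX as [HXH2 [_ [_ [M HM]]]].
  exists (sqrt M); intros w Hw.
  assert (Hpow : H2 (Cpow w)) by (eexists; apply is_series_Cpow_norm, Hw).
  destruct (ex_series_le (V := C_CompleteNormedModule) (fun n => (symbol n * Cpow w n)%C)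
              (fun n => Cmod (symbol n) * Cmod (Cpow w n)))
    as [s Hs].
  - intros n; apply Req_le, Cmod_mult.
  - apply ex_series_Cmod_mult; [apply H2_JH2, HXH2, H2_e0|exact Hpow].
  - exists s; split; [exact Hs|].
    rewrite <- (sqrt_pow2 (Cmod s)) by apply Cmod_ge_0.
    apply sqrt_le_1_alt, (Cmod_symbol_series_sq_le w s M HM Hw Hs).
Qed.

End ShiftCommuting.

Theorem proposition10p1 (X : (nat -> C) -> (nat -> C)) (HX : antilinear_op X) :
  (forall f, H2 f -> X (Mz f) = Mz (X f)) <->
  (exists theta : nat -> C, Hinf theta /\
     forall f, H2 f -> X f = JH2 (Mtheta theta f)).
Proof.
  split.
  - intros HXMz; exists (symbol X); split.
    + apply symbol_Hinf; assumption.
    + apply X_eq_JH2_Mtheta; assumption.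
  - intros [theta [_ Htheta]] f Hf.
    rewrite (Htheta _ (H2_Mz f Hf)), (Htheta f Hf), Mtheta_Mz, JH2_Mz; reflexivity.
Qed.
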